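(* Assume (A1)–(A4), let $x_1\in R\mathbb{B}$, and run the Algorithm with $\eta>0$ and $\rho\in[0,\epsilon]$. Then for every $t\in[T]$ with $t<T$, $$\mathrm{dist}(x_{t+1},\mathcal{X}_\rho)\le\sqrt{\gamma}\,\mathrm{dist}(x_t,\mathcal{X}_\rho)+\eta G_f .$$ Consequently, for all such $t$, $$\mathrm{dist}(x_{t+1},\mathcal{X}_\rho)\le\gamma^{t/2}\,\mathrm{dist}(x_1,\mathcal{X}_\rho)+\frac{\eta G_f}{1-\sqrt{\gamma}} .$$
   Context: Let $d,T$ be positive integers and $[T]=\{1,\dots,T\}$. Write $\|\cdot\|$ for the Euclidean norm and $\mathbb{B}=\{x\in\mathbb{R}^d:\|x\|\le1\}$. For a closed convex set $\mathcal{Y}$, $\Pi_{\mathcal{Y}}$ is the Euclidean projection onto $\mathcal{Y}$ and $\mathrm{dist}(z,\mathcal{Y})=\min_{y\in\mathcal{Y}}\|z-y\|$. For $a\in\mathbb{R}$, $[a]_+=\max(a,0)$. Let $g:\mathbb{R}^d\to\mathbb{R}$ be convex with subdifferential $\partial g(x)$. Set $\mathcal{X}=\{x:g(x)\le0\}$, and for $\rho\ge0$ set $\mathcal{X}_\rho=\{x:g(x)\le-\rho\}$. Assumptions: (A1) there is $R>0$ with $\mathcal{X}\subseteq R\mathbb{B}$; (A2) $f_1,\dots,f_T:\mathbb{R}^d\to\mathbb{R}$ are convex and differentiable, and there is $G_f>0$ with $\|\nabla f_t(x)\|\le G_f$ for all $x\in R\mathbb{B}$ and all $t\in[T]$; (A3)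 there is $G_g>0$ with $\|s\|\le G_g$ for all $s\in\partial g(x)$ and all $x\in R\mathbb{B}$; (A4) there are $\sigma,\epsilon>0$ such that $\mathcal{X}'=\{x:g(x)=-\epsilon\}$ is nonempty and $\|s\|\ge\sigma$ for all $s\in\partial g(x)$ and all $x\in\mathcal{X}'$. Algorithm (OGD with Polyak feasibility steps). Inputs are $x_1\in\mathbb{R}^d$, $\eta>0$ and $\rho\ge0$. For $t=1,\dots,T$: - play $x_t$ and then receive $f_t$; the functions may be chosen adversarially and may depend on past actions; - query $g_t=g(x_t)$ and some $s_t\in\partial g(x_t)$; - set $y_t=x_t-\eta\nabla f_t(x_t)$; - if $s_t\ne0$, set $x_{t+1}=\Pi_{R\mathbb{B}}\big(y_t-\frac{[g_t+s_t^\top(y_t-x_t)+\rho]_+}{\|s_t\|^2}s_t\big)$; if $s_t=0$, set $x_{t+1}=\Pi_{R\mathbb{B}}(y_t)$. Also $\gamma=1-\sigma^2/G_g^2$. *)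

From HB Require Import structures.
From mathcomp Require Import all_boot all_order all_algebra.
From mathcomp Require Import boolp classical_sets reals.
Set Implicit Arguments. Unset Strict Implicit. Unset Printing Implicit Defensive.
Import Order.TTheory GRing.Theory Num.Theory.
Local Open Scope ring_scope.
Local Open Scope classical_set_scope.

Section Defs.
Variables (R : realType) (d : nat).
Notation vec := 'rV[R]_d.

Definition dotp (u v : vec) : R := \sum_(i < d) u 0 i * v 0 i.
Definition enorm (u : vec) : R := Num.sqrt (dotp u u).

Definition dist (z : vec) (Y : set vec) : R := inf [set enorm (z - y) | y in Y].

Definition pos_part (a : R) : R := Num.max a 0.

Definition ball_set (Rad : R) : set vec := [set x | enorm x <= Rad].

Definition is_proj (Y : set vec) (z p : vec) : Prop :=
  Y p /\ forall y, Y y -> enorm (z - p) <= enorm (z - y).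

Definition convex_fun (f : vec -> R) : Prop :=
  forall (x y : vec) (l : R), 0 <= l <= 1 ->
    f (l *: x + (1 - l) *: y) <= l * f x + (1 - l) * f y.

Definition subgrad (g : vec -> R) (x s : vec) : Prop :=
  forall y, g x + dotp s (y - x) <= g y.

Definition is_gradient (f : vec -> R) (x v : vec) : Prop :=
  forall e : R, 0 < e -> exists2 del : R, 0 < del &
    forall h : vec, enorm h < del ->
      `|f (x + h) - f x - dotp v h| <= e * enorm h.

Definition differentiable_fun (f : vec -> R) : Prop :=
  forall x, exists v, is_gradient f x v.

Definition sublevel (g : vec -> R) (rho : R) : set vec := [set x | g x <= - rho].

(* one step of OGD with Polyak feasibility step, before projection *)
Definition polyak_pre (g : vec -> R) (eta rho : R) (x gf s : vec) : vec :=
  let y := x - eta *: gf in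
  if s != 0 then y - (pos_part (g x + dotp s (y - x) + rho) / (dotp s s)) *: s
  else y.

End Defs.

From HB Require Import structures.
From mathcomp Require Import all_boot all_order all_algebra.
From mathcomp Require Import boolp classical_sets reals topology normedtype derive.
From mathcomp Require Import ring lra.
Import Order.TTheory GRing.Theory Num.Theory.
Import numFieldNormedType.Exports.
Set Implicit Arguments. Unset Strict Implicit. Unset Printing Implicit Defensive.
Local Open Scope ring_scope.
Local Open Scope classical_set_scope.

(* The Polyak step sends x_t to its projection w onto the half-space
   {y | g(x_t) + <s_t, y - x_t> + rho <= 0}, which contains X_rho since s_t is a
   subgradient; so |w - y|^2 <= |x_t - y|^2 - [g(x_t) + rho]_+^2 / |s_t|^2 on X_rho.
   The Slater-type condition (A4) gives the error bound
   sigma dist(x, X_rho) <= [g(x) + rho]_+ : at the point p of X_eps nearest to x some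
   nonnegative multiple of x - p is a subgradient of g, hence has norm >= sigma.
   With |s_t| <= G_g this yields dist(w, X_rho)^2 <= gamma dist(x_t, X_rho)^2.
   The gradient step moves the half-space projection by at most eta G_f (it is
   nonexpansive) and the projection onto R B, a convex superset of X_rho, does not
   increase distances to X_rho. Unrolling the recursion gives the second bound. *)

Section InnerProduct.
Variables (R : realType) (d : nat).
Local Notation vec := 'rV[R]_d.
Implicit Types (a : R) (u v w : vec).

Lemma dotpC u v : dotp u v = dotp v u.
Proof. by apply: eq_bigr => i _; rewrite mulrC. Qed.

Lemma dotpDl u v w : dotp (u + v) w = dotp u w + dotp v w.
Proof. by rewrite /dotp -big_split; apply: eq_bigr => i _; rewrite !mxE mulrDl. Qed.

Lemma dotpZl a u v : dotp (a *: u) v = a * dotp u v.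
Proof. by rewrite /dotp mulr_sumr; apply: eq_bigr => i _; rewrite !mxE mulrA. Qed.

Lemma dotpNl u v : dotp (- u) v = - dotp u v.
Proof. by rewrite -scaleN1r dotpZl mulN1r. Qed.

Lemma dotpBl u v w : dotp (u - v) w = dotp u w - dotp v w.
Proof. by rewrite dotpDl dotpNl. Qed.

Lemma dotpDr u v w : dotp w (u + v) = dotp w u + dotp w v.
Proof. by rewrite !(dotpC w) dotpDl. Qed.

Lemma dotpZr a u v : dotp v (a *: u) = a * dotp v u.
Proof. by rewrite !(dotpC v) dotpZl. Qed.

Lemma dotpNr u v : dotp v (- u) = - dotp v u.
Proof. by rewrite !(dotpC v) dotpNl. Qed.

Lemma dotpBr u v w : dotp w (u - v) = dotp w u - dotp w v.
Proof. by rewrite !(dotpC w) dotpBl. Qed.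

Lemma dotp0l v : dotp 0 v = 0.
Proof. by rewrite -(scale0r 0) dotpZl mul0r. Qed.

Lemma dotp0r v : dotp v 0 = 0.
Proof. by rewrite dotpC dotp0l. Qed.

Lemma dotp_ge0 u : 0 <= dotp u u.
Proof. by apply: sumr_ge0 => i _; rewrite -expr2 sqr_ge0. Qed.

Lemma dotp_gt0 u : u != 0 -> 0 < dotp u u.
Proof.
move=> u0; rewrite lt_def dotp_ge0 andbT; apply: contra u0.
rewrite /dotp psumr_eq0 => [/allP u0|i _]; last by rewrite -expr2 sqr_ge0.
apply/eqP/rowP => i; rewrite mxE.
by apply/eqP; rewrite -sqrf_eq0 expr2 (eqP (u0 i (mem_index_enum _))).
Qed.

Lemma enorm_ge0 u : 0 <= enorm u.
Proof. exact: sqrtr_ge0. Qed.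

Lemma enorm0 : enorm (0 : vec) = 0.
Proof. by rewrite /enorm dotp0r sqrtr0. Qed.

Lemma enorm_sq u : enorm u ^+ 2 = dotp u u.
Proof. by rewrite /enorm sqr_sqrtr // dotp_ge0. Qed.

Lemma enorm_le u v : (enorm u <= enorm v) = (dotp u u <= dotp v v).
Proof. by rewrite /enorm ler_sqrt // dotp_ge0. Qed.

Lemma cauchy_schwarz u v : dotp u v <= enorm u * enorm v.
Proof.
have [->|v0] := eqVneq v 0; first by rewrite dotp0r enorm0 mulr0.
have vv := dotp_gt0 v0.
have := dotp_ge0 (u - (dotp u v / dotp v v) *: v).
rewrite !(dotpBl, dotpBr, dotpZl, dotpZr) (dotpC v u) => key.
have sq : dotp u v ^+ 2 <= dotp u u * dotp v v.
  move: key; set a := dotp u v; set b := dotp v v; set c := dotp u u => key.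
  have : 0 <= (c * b - a ^+ 2) / b.
    by apply: le_trans key _; rewrite le_eqVlt; apply/orP; left; apply/eqP; field; rewrite gt_eqF.
  by rewrite pmulr_lge0 ?invr_gt0 // subr_ge0.
have [uv0|uv0] := lerP (dotp u v) 0.
  by apply: le_trans uv0 _; rewrite mulr_ge0 ?enorm_ge0.
rewrite -(ler_pXn2r (n:=2)) //; last by rewrite nnegrE mulr_ge0 ?enorm_ge0.
  by rewrite exprMn !enorm_sq.
by rewrite nnegrE ltW.
Qed.

Lemma enormD u v : enorm (u + v) <= enorm u + enorm v.
Proof.
rewrite -(ler_pXn2r (n:=2)) ?nnegrE ?addr_ge0 ?enorm_ge0 //.
rewrite enorm_sq !(dotpDl, dotpDr) sqrrD !enorm_sq (dotpC v u).
by have := cauchy_schwarz u v; lra.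
Qed.

Lemma enormZ a u : enorm (a *: u) = `|a| * enorm u.
Proof.
rewrite /enorm dotpZl dotpZr mulrA -expr2 sqrtrM ?sqr_ge0 //.
by rewrite sqrtr_sqr.
Qed.

Lemma enormN u : enorm (- u) = enorm u.
Proof. by rewrite -scaleN1r enormZ normrN normr1 mul1r. Qed.

Lemma enormB u v : enorm (u - v) = enorm (v - u).
Proof. by rewrite -enormN opprB. Qed.

Lemma enorm_triangle u v w : enorm (u - w) <= enorm (u - v) + enorm (v - w).
Proof. by have := enormD (u - v) (v - w); rewrite addrA subrK. Qed.

End InnerProduct.

Ltac dotp_expand :=
  rewrite ?(dotpDl, dotpDr, dotpZl, dotpZr, dotpBl, dotpBr, dotpNl, dotpNr).

Section Distance.
Variables (R : realType) (d : nat).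
Local Notation vec := 'rV[R]_d.
Implicit Types (z y : vec) (Y : set vec).

Lemma dist_le z Y y : Y y -> dist z Y <= enorm (z - y).
Proof.
move=> Yy; apply: ge_inf; last by exists y.
by exists 0 => _ [y' _ <-]; exact: enorm_ge0.
Qed.

Lemma dist_ge z Y c : Y !=set0 ->
  (forall y, Y y -> c <= enorm (z - y)) -> c <= dist z Y.
Proof.
move=> [y0 Y0] zY; apply: lb_le_inf; first by exists (enorm (z - y0)), y0.
by move=> _ [y Yy <-]; exact: zY.
Qed.

Lemma dist_ge0 z Y : Y !=set0 -> 0 <= dist z Y.
Proof. by move=> Yn; apply: dist_ge => // y _; exact: enorm_ge0. Qed.

Lemma dist_mem z Y : Y z -> dist z Y = 0.
Proof.
move=> Yz; apply/eqP; rewrite eq_le dist_ge0; last by exists z.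
by have := dist_le z Yz; rewrite subrr enorm0 => ->.
Qed.

Lemma dist_le_of_enorm z z' Y c : Y !=set0 ->
  (forall y, Y y -> enorm (z - y) <= enorm (z' - y) + c) -> dist z Y <= dist z' Y + c.
Proof.
move=> Yn zz'; rewrite -lerBlDr; apply: dist_ge => // y Yy.
by rewrite lerBlDr; apply: le_trans (dist_le z Yy) (zz' _ Yy).
Qed.

Lemma dist_lipschitz z z' Y : Y !=set0 -> dist z Y <= dist z' Y + enorm (z - z').
Proof.
move=> Yn; apply: dist_le_of_enorm => // y _.
by rewrite [leRHS]addrC; apply: enorm_triangle.
Qed.

End Distance.

Section Projection.
Variables (R : realType) (d : nat).
Local Notation vec := 'rV[R]_d.
Implicit Types (z y p q : vec) (C : set vec).

Definition convex_set C :=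
  forall y y' (l : R), 0 <= l <= 1 -> C y -> C y' -> C (l *: y + (1 - l) *: y').

Lemma convex_ball (r : R) : convex_set (ball_set r).
Proof.
move=> y y' l /andP [l0 l1]; rewrite /ball_set /= => yr y'r.
apply: le_trans (enormD _ _) _; rewrite !enormZ !ger0_norm ?subr_ge0 //.
by have := enorm_ge0 y; have := enorm_ge0 y'; nra.
Qed.

Lemma ler0_of_le_small_mul (c b : R) : 0 <= b ->
  (forall l, 0 < l -> l < 1 -> c <= l * b) -> c <= 0.
Proof.
move=> b0 cb; rewrite leNgt; apply/negP => c0.
have cb0 : 0 < 2 * (c + b) by lra.
have := cb (c / (2 * (c + b))).
rewrite divr_gt0 // ltr_pdivrMr // mul1r mulrAC ler_pdivlMr //.
by move=> /(_ isT); nra.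
Qed.

Lemma proj_variational C z p q : convex_set C -> is_proj C z p -> C q ->
  dotp (z - p) (q - p) <= 0.
Proof.
move=> cC [Cp pmin] Cq; rewrite -(@ler_pM2l _ 2) // mulr0.
apply: (ler0_of_le_small_mul (dotp_ge0 (q - p))) => l l0 l1.
have l01 : 0 <= l <= 1 by rewrite !ltW.
have := pmin _ (cC q p l l01 Cq Cp).
have -> : z - (l *: q + (1 - l) *: p) = (z - p) - l *: (q - p).
  by apply/rowP => j; rewrite !mxE; ring.
move: (z - p) (q - p) => e v; rewrite enorm_le; dotp_expand; rewrite (dotpC v e).
by nra.
Qed.

Lemma proj_nonexpansive_to C z p q : convex_set C -> is_proj C z p -> C q ->
  enorm (p - q) <= enorm (z - q).
Proof.
move=> cC zp Cq; have vi := proj_variational cC zp Cq.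
have -> : z - q = (z - p) - (q - p) by rewrite opprB addrA subrK.
rewrite (enormB p q) enorm_le; move: vi (dotp_ge0 (z - p)).
move: (z - p) (q - p) => e v; dotp_expand; rewrite (dotpC v e); lra.
Qed.

Lemma dist_proj_le C Y z p : convex_set C -> Y `<=` C -> Y !=set0 ->
  is_proj C z p -> dist p Y <= dist z Y.
Proof.
move=> cC YC Yn zp; rewrite -[dist z Y]addr0; apply: dist_le_of_enorm => // y Yy.
by rewrite addr0; apply: proj_nonexpansive_to cC zp (YC _ Yy).
Qed.

End Projection.

Section Halfspace.
Variables (R : realType) (d : nat).
Local Notation vec := 'rV[R]_d.
Implicit Types (a : R) (x s z p : vec).

Lemma pos_part_ge0 a : 0 <= pos_part a.
Proof. by rewrite /pos_part le_max lexx orbT. Qed.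

Lemma pos_part_id a : 0 <= a -> pos_part a = a.
Proof. by move=> a0; rewrite /pos_part max_l. Qed.

Lemma pos_part_eq0 a : a <= 0 -> pos_part a = 0.
Proof. by move=> a0; rewrite /pos_part max_r. Qed.

Lemma pos_part_sqr_diff_le a b :
  (pos_part (a + b) - pos_part a) ^+ 2 <= (pos_part (a + b) - pos_part a) * b.
Proof.
have [ab|ab] := lerP (a + b) 0; have [a0|a0] := lerP a 0;
  rewrite ?(pos_part_eq0 ab) ?(pos_part_eq0 a0);
  rewrite ?(pos_part_id (ltW ab)) ?(pos_part_id (ltW a0)); nra.
Qed.

(* for [s != 0], the Euclidean projection of [z] onto the half-space [a + <s, y - x> <= 0] *)
Definition halfspace_proj a x s z : vec :=
  z - (pos_part (a + dotp s (z - x)) / dotp s s) *: s.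

Lemma halfspace_proj_nonexpansive a x s z (z' : vec) : 0 < dotp s s ->
  enorm (halfspace_proj a x s z - halfspace_proj a x s z') <= enorm (z - z').
Proof.
move=> s0; rewrite /halfspace_proj.
set m := pos_part (a + dotp s (z - x)) - pos_part (a + dotp s (z' - x)).
have -> : z - (pos_part (a + dotp s (z - x)) / dotp s s) *: s
          - (z' - (pos_part (a + dotp s (z' - x)) / dotp s s) *: s)
        = (z - z') - (m / dotp s s) *: s.
  by apply/rowP => j; rewrite /m !mxE; ring.
have ds : dotp s (z - x) = dotp s (z' - x) + dotp s (z - z').
  by rewrite -dotpDr; congr dotp; apply/rowP => j; rewrite !mxE; ring.
have hm : m ^+ 2 <= m * dotp s (z - z').
  by rewrite /m ds addrA; apply: pos_part_sqr_diff_le.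
rewrite enorm_le; set c := m / dotp s s.
have mE : m = c * dotp s s by rewrite /c divfK ?lt0r_neq0.
move: hm; rewrite mE; move: (z - z') => dz; rewrite (dotpC s dz) => hc.
have {}hc : c ^+ 2 * dotp s s <= c * dotp dz s.
  by rewrite -(ler_pM2r s0); move: hc; rewrite exprMn; nra.
have c2 := mulr_ge0 (sqr_ge0 c) (ltW s0).
by dotp_expand; rewrite (dotpC s dz); nra.
Qed.

Lemma halfspace_proj_sqr_dist a x s p : 0 < dotp s s -> a + dotp s (p - x) <= 0 ->
  dotp (halfspace_proj a x s x - p) (halfspace_proj a x s x - p)
    <= dotp (x - p) (x - p) - pos_part a ^+ 2 / dotp s s.
Proof.
move=> s0 ps; rewrite /halfspace_proj subrr dotp0r addr0.
have [a0|a0] := lerP a 0.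
  by rewrite pos_part_eq0 // mul0r scale0r subr0 expr0n /= mul0r subr0.
rewrite (pos_part_id (ltW a0)).
have -> : x - (a / dotp s s) *: s - p = (x - p) - (a / dotp s s) *: s.
  by rewrite addrAC.
have aq : a <= dotp s (x - p) by rewrite -opprB dotpNr; lra.
have c0 : 0 < a / dotp s s by rewrite divr_gt0.
have cs : a / dotp s s * dotp s s = a by rewrite divfK ?gt_eqF.
have -> : a ^+ 2 / dotp s s = a / dotp s s * a by rewrite expr2 mulrAC.
move: aq; move: (x - p) (a / dotp s s) c0 cs => q c c0 cs aq.
by dotp_expand; rewrite (dotpC q s); nra.
Qed.

End Halfspace.

Section ConvexContinuity.
Variables (R : realType) (d : nat).
Local Notation vec := 'rV[R]_d.
Implicit Types (y z h : vec) (g : vec -> R).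

Lemma convex_bounded_on_cube_slice g : convex_fun g ->
  forall (k : nat) y, exists M, forall h,
    (forall j : 'I_d, (k <= j)%N -> h 0 j = 0) -> (forall j, `|h 0 j| <= 1) ->
    g (y + h) <= M.
Proof.
move=> cg; elim=> [|k IH] y.
  exists (g y) => h h0 _.
  have -> : h = 0 by apply/rowP => j; rewrite h0 // mxE.
  by rewrite addr0.
have [kd|kd] := ltnP k d; last first.
  have [M HM] := IH y; exists M => h h0; apply: HM => j kj.
  by have := leq_trans (ltn_ord j) kd; rewrite ltnNge kj.
pose jk := Ordinal kd; pose e : vec := \row_j (if j == jk then 1 else 0).
have [M1 H1] := IH (y + e); have [M2 H2] := IH (y - e).
exists (Num.max M1 M2) => h h0 h1.
(* [y + h] lies on the segment between [y + e + h'] and [y - e + h'],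
   where [h'] is [h] with its [k]-th coordinate erased *)
pose h' : vec := \row_j (if j == jk then 0 else h 0 j).
have h'0 : forall j : 'I_d, (k <= j)%N -> h' 0 j = 0.
  move=> j kj; rewrite mxE; case: eqP => // /eqP njk; apply: h0.
  by rewrite ltn_neqAle kj andbT eq_sym; apply: contra njk => /eqP e1; apply/eqP/val_inj.
have h'1 : forall j, `|h' 0 j| <= 1.
  by move=> j; rewrite mxE; case: eqP => _ //; rewrite normr0.
set c := h 0 jk; have /andP [c1 c2] : -1 <= c <= 1 by rewrite -ler_norml; exact: h1.
set l := (1 + c) / 2.
have l01 : 0 <= l <= 1 by apply/andP; split; rewrite /l; lra.
have -> : y + h = l *: (y + e + h') + (1 - l) *: (y - e + h').
  apply/rowP => j; rewrite !mxE; case: eqP => [->|_]; first by rewrite /l /c; field.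
  by rewrite addr0 subr0 -mulrDl subrKC mul1r.
apply: le_trans (cg _ _ _ l01) _.
have := H1 _ h'0 h'1; have := H2 _ h'0 h'1.
have mx1 : M1 <= Num.max M1 M2 by rewrite le_max lexx.
have mx2 : M2 <= Num.max M1 M2 by rewrite le_max lexx orbT.
by case/andP: l01; nra.
Qed.

Lemma convex_bounded_on_cube g y : convex_fun g ->
  exists M, forall h, (forall j, `|h 0 j| <= 1) -> g (y + h) <= M.
Proof.
move=> cg; have [M HM] := convex_bounded_on_cube_slice cg d y.
by exists M => h; apply: HM => j; rewrite leqNgt ltn_ord.
Qed.

Lemma convex_oscillation_on_cube g y : convex_fun g -> exists K, 0 <= K /\
  forall (t : R) h, 0 < t -> t <= 1 -> (forall j, `|h 0 j| <= t) ->
    `|g (y + h) - g y| <= t * K.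
Proof.
move=> cg; have [M HM] := convex_bounded_on_cube y cg.
have gyM : g y <= M by rewrite -[y]addr0; apply: HM => j; rewrite mxE normr0.
exists (M - g y); split; first by rewrite subr_ge0.
move=> t h t0 t1 ht; have tn := lt0r_neq0 t0.
have ht' : forall j, `|(t^-1 *: h) 0 j| <= 1.
  by move=> j; rewrite mxE normrM gtr0_norm ?invr_gt0 // ler_pdivrMl // mulr1.
have ht'' : forall j, `|(- (t^-1 *: h)) 0 j| <= 1.
  by move=> j; rewrite mxE normrN ht'.
(* upper bound: [y + h] lies between [y] and [y + h / t] *)
have up : g (y + h) <= t * M + (1 - t) * g y.
  have t01 : 0 <= t <= 1 by rewrite t1 ltW.
  have -> : y + h = t *: (y + t^-1 *: h) + (1 - t) *: y.
    by apply/rowP => j; rewrite !mxE; field.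
  apply: le_trans (cg _ _ _ t01) _.
  by rewrite lerD2r ler_pM2l // HM.
(* lower bound: [y] lies between [y + h] and [y - h / t] *)
have lo : (1 + t) * g y <= g (y + h) + t * M.
  have t1n : 1 + t != 0 by rewrite lt0r_neq0 // ltr_wpDr // ltW.
  set l := (1 + t)^-1.
  have l01 : 0 <= l <= 1.
    by apply/andP; split; [rewrite invr_ge0; lra | rewrite invf_le1; lra].
  have E : l *: (y + h) + (1 - l) *: (y + - (t^-1 *: h)) = y.
    by apply/rowP => j; rewrite !mxE /l; field; rewrite tn t1n.
  have := cg (y + h) (y + - (t^-1 *: h)) _ l01; rewrite E => cvx.
  have {}cvx : g y <= l * g (y + h) + (1 - l) * M.
    by apply: le_trans cvx _; rewrite lerD2l ler_wpM2l ?HM // subr_ge0; case/andP: l01.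
  have e1 : (1 + t) * (l * g (y + h) + (1 - l) * M) = g (y + h) + t * M.
    by rewrite /l; field.
  by rewrite -e1 ler_pM2l // ltr_wpDr // ltW.
by rewrite ler_norml; apply/andP; split; lra.
Qed.

Lemma coord_le_norm z (j : 'I_d) : `|z 0 j| <= `|z|.
Proof.
rewrite [leRHS]/Num.Def.normr /= mx_normrE.
by apply: (le_trans _ (le_bigmax _ _ (ord0, j))).
Qed.

Lemma norm_le_enorm z : `|z| <= enorm z.
Proof.
rewrite [leLHS]/Num.Def.normr /= mx_normrE; apply: bigmax_le; first exact: enorm_ge0.
move=> [i j] _ /=; rewrite (ord1 i).
rewrite -(ler_pXn2r (n:=2)) ?nnegrE ?enorm_ge0 // enorm_sq real_normK ?num_real //.
rewrite /dotp (bigD1 j) //= expr2 lerDl.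
by apply: sumr_ge0 => k _; rewrite -expr2 sqr_ge0.
Qed.

Lemma convex_continuous g : convex_fun g -> continuous g.
Proof.
move=> cg y; apply/(@cvgrPdist_le _ _ _ (nbhs y) (nbhs_filter y)) => e e0.
have [K [K0 HK]] := convex_oscillation_on_cube y cg.
set del := Num.min 1 (e / (K + 1)).
have del0 : 0 < del by rewrite lt_min ltr01 divr_gt0 // ltr_wpDl.
have del1 : del <= 1 by rewrite ge_min lexx.
have delK : del * K <= e.
  have Kp : 0 < K + 1 by lra.
  apply: (@le_trans _ _ (e / (K + 1) * K)); first by rewrite ler_wpM2r // ge_min lexx orbT.
  by rewrite mulrAC ler_pdivrMr // ler_wpM2l ?ltW //; lra.
apply/nbhs_ballP; exists del => // z; rewrite -ball_normE /= => yz.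
have hz : forall j, `|(z - y) 0 j| <= del.
  by move=> j; apply: le_trans (coord_le_norm _ j) _; rewrite distrC ltW.
have := HK _ _ del0 del1 hz; rewrite subrKC distrC => /le_trans; exact.
Qed.

End ConvexContinuity.

Section NearestPoint.
Variables (R : realType) (d : nat).
Local Notation vec := 'rV[R]_d.
Implicit Types (x y z : vec) (g : vec -> R).

Lemma convex_enorm_from x : convex_fun (fun z => enorm (x - z)).
Proof.
move=> y z l /andP [l0 l1].
have -> : x - (l *: y + (1 - l) *: z) = l *: (x - y) + (1 - l) *: (x - z).
  by apply/rowP => j; rewrite !mxE; ring.
by apply: le_trans (enormD _ _) _; rewrite !enormZ !ger0_norm ?subr_ge0.
Qed.

Lemma sublevel_nearest_point g (c Rad : R) x : convex_fun g ->
  sublevel g c `<=` ball_set Rad -> sublevel g c !=set0 ->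
  exists p, sublevel g c p /\ forall z, sublevel g c z -> enorm (x - p) <= enorm (x - z).
Proof.
move=> cg sub Yn.
have cY : compact (sublevel g c).
  apply: bounded_closed_compact.
    exists Rad; split; first exact: num_real.
    move=> M RM z /sub; rewrite /ball_set /= => zR.
    by apply: le_trans (norm_le_enorm z) (le_trans zR (ltW RM)).
  apply: (@preimage_closed _ _ g [set r : R | r <= - c]); last exact: closed_le.
  by move=> z _; exact: convex_continuous.
have [p Yp pmin] := EVT_min_rV Yn cY
  (continuous_subspaceT (convex_continuous (convex_enorm_from x))).
exists p; split; first by rewrite inE in Yp.
by move=> z Yz; apply: pmin; rewrite inE.
Qed.

End NearestPoint.

Section HalfspaceSubgradient.
Variables (R : realType) (d : nat).
Local Notation vec := 'rV[R]_d.
Variables (q : vec -> R) (u : vec).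
Hypothesis q_convex : convex_fun q.
Hypothesis u_neq0 : 0 < dotp u u.
Hypothesis q_gt0 : forall h, 0 < dotp u h -> 0 < q h.

Lemma convex_ge0_on_hyperplane h : dotp u h = 0 -> 0 <= q h.
Proof.
move=> uh; rewrite leNgt; apply/negP => qh.
set Q : R := `|q (h + u)| + 1.
have QQ : q (h + u) <= Q by rewrite /Q; have := ler_norm (q (h + u)); lra.
have Q0 : 0 < Q by rewrite ltr_pwDr.
have den : 0 < - q h + Q by lra.
(* by convexity [q (h + l u) <= 0], although [<u, h + l u>] > 0 *)
set l := - q h / (- q h + Q).
have l0 : 0 < l by rewrite divr_gt0 //; lra.
have l1 : l < 1 by rewrite ltr_pdivrMr // mul1r; lra.
have l01 : 0 <= l <= 1 by rewrite !ltW.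
have := q_convex (h + u) h l01.
have -> : l *: (h + u) + (1 - l) *: h = h + l *: u.
  by apply/rowP => j; rewrite !mxE; ring.
have := @q_gt0 (h + l *: u); rewrite dotpDr dotpZr uh add0r => /(_ (mulr_gt0 l0 u_neq0)).
have E : (1 - l) * q h + l * Q = 0 by rewrite /l; field; lra.
by nra.
Qed.

Lemma convex_slope_cross h h' : dotp u h < 0 -> 0 < dotp u h' ->
  dotp u h * q h' <= dotp u h' * q h.
Proof.
set a := dotp u h; set b := dotp u h' => a0 b0.
have ba : 0 < b - a by lra.
set l := b / (b - a).
have l01 : 0 <= l <= 1.
  by apply/andP; split; [rewrite divr_ge0 // ltW | rewrite ler_pdivrMr // mul1r; lra].
have hyp : dotp u (l *: h + (1 - l) *: h') = 0.
  by rewrite dotpDr !dotpZr -/a -/b /l; field; lra.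
have := le_trans (convex_ge0_on_hyperplane hyp) (q_convex h h' l01).
have -> : l * q h + (1 - l) * q h' = (b * q h - a * q h') / (b - a).
  by rewrite /l; field; lra.
by rewrite pmulr_lge0 ?invr_gt0 // subr_ge0 mulrC [b * _]mulrC.
Qed.

Lemma convex_halfspace_subgradient :
  exists2 mu, 0 <= mu & forall h, mu * dotp u h <= q h.
Proof.
set S := [set r : R | exists2 h, 0 < dotp u h & r = q h / dotp u h].
have S0 : lbound S 0 by move=> _ [h hp ->]; rewrite divr_ge0 ?ltW ?q_gt0.
have Sn : S !=set0 by exists (q u / dotp u u), u.
have Slb : has_lbound S by exists 0.
exists (inf S); first exact: lb_le_inf.
move=> h; have [hp|hn|hz] := ltgtP 0 (dotp u h).
- have : inf S <= q h / dotp u h by apply: ge_inf => //; exists h.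
  by rewrite ler_pdivlMr // mulrC.
- have : q h / dotp u h <= inf S.
    apply: lb_le_inf => // _ [h' h'p ->].
    rewrite ler_ndivrMr // mulrAC ler_pdivrMr // mulrC [q h * _]mulrC.
    exact: convex_slope_cross.
  by rewrite ler_ndivrMr // mulrC.
- by rewrite -hz mulr0; apply: convex_ge0_on_hyperplane.
Qed.

End HalfspaceSubgradient.

Section NearestPointNormal.
Variables (R : realType) (d : nat).
Local Notation vec := 'rV[R]_d.
Variables (g : vec -> R) (eps : R) (x p : vec).
Hypothesis g_convex : convex_fun g.
Hypothesis gx_gt : - eps < g x.
Hypothesis p_sublevel : sublevel g eps p.
Hypothesis p_nearest : forall z, sublevel g eps z -> enorm (x - p) <= enorm (x - z).

Let xp_gt0 : 0 < dotp (x - p) (x - p).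
Proof.
apply: dotp_gt0; rewrite subr_eq0; apply: contraTneq gx_gt => ->.
by rewrite -leNgt.
Qed.

Lemma nearest_point_on_level : g p = - eps.
Proof.
apply/eqP; rewrite eq_le p_sublevel /= leNgt; apply/negP => gp.
(* otherwise some point of [p, x] closer to [x] than [p] is still in the sublevel set *)
set t := (- eps - g p) / (g x - g p).
have den : 0 < g x - g p by rewrite subr_gt0 (lt_trans gp gx_gt).
have t1 : t < 1 by rewrite ltr_pdivrMr // mul1r ltrD2r.
have t0 : 0 < t by rewrite divr_gt0 // subr_gt0.
have t01 : 0 <= t <= 1 by rewrite !ltW.
have gt : t * g x + (1 - t) * g p = - eps by rewrite /t; field; lra.
have := g_convex x p t01; rewrite gt => /p_nearest.
have -> : x - (t *: x + (1 - t) *: p) = (1 - t) *: (x - p).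
  by apply/rowP => j; rewrite !mxE; ring.
rewrite enormZ ger0_norm; last lra.
have : 0 < enorm (x - p) by rewrite sqrtr_gt0.
by nra.
Qed.

Lemma nearest_point_ascent h : 0 < dotp (x - p) h -> g p < g (p + h).
Proof.
move=> uh; have hh := dotp_ge0 h.
(* a short step [t h] already moves [p] closer to [x], hence out of the sublevel set *)
set t := dotp (x - p) h / (dotp h h + dotp (x - p) h).
have den : 0 < dotp h h + dotp (x - p) h by lra.
have t0 : 0 < t by rewrite divr_gt0.
have t1 : t <= 1 by rewrite ler_pdivrMr // mul1r; lra.
have th : t * dotp h h < dotp (x - p) h by rewrite /t mulrAC ltr_pdivrMr //; nra.
have gth : - eps < g (p + t *: h).
  rewrite ltNge; apply/negP => /p_nearest; rewrite enorm_le.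
  have -> : x - (p + t *: h) = (x - p) - t *: h by rewrite opprD addrA.
  move: (x - p) uh th => u uh th.
  by dotp_expand; rewrite (dotpC h u); nra.
have t01 : 0 <= t <= 1 by rewrite t1 ltW.
have := g_convex (p + h) p t01.
have -> : t *: (p + h) + (1 - t) *: p = p + t *: h.
  by apply/rowP => j; rewrite !mxE; ring.
by rewrite nearest_point_on_level; nra.
Qed.

Lemma nearest_point_normal_subgradient :
  exists2 mu, 0 <= mu & subgrad g p (mu *: (x - p)).
Proof.
have q_convex : convex_fun (fun h => g (p + h) - g p).
  move=> h h' l l01; have := g_convex (p + h) (p + h') l01.
  have -> : l *: (p + h) + (1 - l) *: (p + h') = p + (l *: h + (1 - l) *: h').
    by apply/rowP => j; rewrite !mxE; ring.
  lra.
have q_gt0 h : 0 < dotp (x - p) h -> 0 < g (p + h) - g p.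
  by move=> /nearest_point_ascent; rewrite subr_gt0.
have [mu mu0 mu_sub] := convex_halfspace_subgradient q_convex xp_gt0 q_gt0.
exists mu => // y; have := mu_sub (y - p).
by rewrite subrKC dotpZl; lra.
Qed.

Lemma nearest_point_error_bound (sigma : R) :
  (forall y v, g y = - eps -> subgrad g y v -> sigma <= enorm v) ->
  sigma * enorm (x - p) <= g x + eps.
Proof.
move=> slater; have [mu mu0 sub] := nearest_point_normal_subgradient.
have := slater _ _ nearest_point_on_level sub.
rewrite enormZ ger0_norm // => smu.
have := sub x; rewrite nearest_point_on_level dotpZl -enorm_sq.
have := enorm_ge0 (x - p).
by nra.
Qed.

End NearestPointNormal.

Lemma sublevel_error_bound (R : realType) (d : nat) (g : 'rV[R]_d -> R)
    (eps rho sigma Rad : R) (x : 'rV[R]_d) :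
  convex_fun g -> 0 <= rho <= eps -> 0 <= sigma ->
  sublevel g 0 `<=` ball_set Rad -> (exists y, g y = - eps) ->
  (forall y v, g y = - eps -> subgrad g y v -> sigma <= enorm v) ->
  - rho < g x -> sigma * dist x (sublevel g rho) <= g x + rho.
Proof.
move=> cg /andP [rho0 rhoe] sigma0 sub [y0 gy0] slater gx.
have sub_eps : sublevel g eps `<=` ball_set Rad.
  by move=> z gz; apply: sub; move: gz; rewrite /sublevel /=; lra.
have [|p [gp pmin]] := sublevel_nearest_point x cg sub_eps.
  by exists y0; rewrite /sublevel /= gy0.
have gxe : - eps < g x by lra.
have eb := nearest_point_error_bound cg gxe gp pmin slater.
(* the point of [x, p] where the convexity bound reaches level [- rho] *)
set l := (g x + rho) / (g x + eps).
have den : 0 < g x + eps by lra.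
have l01 : 0 <= l <= 1.
  by apply/andP; split; [rewrite divr_ge0 //; lra | rewrite ler_pdivrMr // mul1r; lra].
have lE : l * (g x + eps) = g x + rho by rewrite /l divfK ?lt0r_neq0.
have gz : sublevel g rho (l *: p + (1 - l) *: x).
  apply: le_trans (cg _ _ _ l01) _.
  by move: gp l01; rewrite /sublevel /= => gp /andP [l0 l1]; nra.
have := dist_le x gz.
have -> : x - (l *: p + (1 - l) *: x) = l *: (x - p).
  by apply/rowP => j; rewrite !mxE; ring.
rewrite enormZ ger0_norm; last by case/andP: l01.
move: l01 => /andP [l0 l1]; have := enorm_ge0 (x - p).
by nra.
Qed.

Section PolyakStep.
Variables (R : realType) (d : nat).
Local Notation vec := 'rV[R]_d.
Implicit Types (x s y : vec) (Y : set vec).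

Lemma halfspace_proj_dist_sqr a x s Y : 0 < dotp s s -> Y !=set0 ->
  (forall y, Y y -> a + dotp s (y - x) <= 0) ->
  dist (halfspace_proj a x s x) Y ^+ 2 + pos_part a ^+ 2 / dotp s s <= dist x Y ^+ 2.
Proof.
move=> s0 Yn Yh; set w := halfspace_proj a x s x; set K := pos_part a ^+ 2 / dotp s s.
have K0 : 0 <= K by rewrite divr_ge0 ?sqr_ge0 ?ltW.
have dw0 := dist_ge0 w Yn.
suff : Num.sqrt (dist w Y ^+ 2 + K) <= dist x Y.
  rewrite -(ler_pXn2r (n:=2)) ?nnegrE ?sqrtr_ge0 ?dist_ge0 //.
  by rewrite sqr_sqrtr // addr_ge0 ?sqr_ge0.
apply: dist_ge => // y Yy; rewrite [leRHS]/enorm ler_sqrt ?dotp_ge0 //.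
have := halfspace_proj_sqr_dist s0 (Yh _ Yy); rewrite -/w -/K.
have : dist w Y ^+ 2 <= dotp (w - y) (w - y).
  by rewrite -enorm_sq ler_pXn2r ?nnegrE ?enorm_ge0 ?dist_le.
lra.
Qed.

Lemma le_sqrt_mul_of_sqr_le (D' D c : R) : 0 <= D' -> 0 <= D ->
  D' ^+ 2 <= c * D ^+ 2 -> D' <= Num.sqrt c * D.
Proof.
move=> D'0 D0 h; have [c0|c0] := lerP 0 c.
  rewrite -(ler_pXn2r (n:=2)) ?nnegrE ?mulr_ge0 ?sqrtr_ge0 //.
  by rewrite exprMn sqr_sqrtr.
rewrite (ler0_sqrtr (ltW c0)) mul0r.
have D2 : D' ^+ 2 <= 0 by apply: le_trans h _; rewrite nmulr_rle0 // sqr_ge0.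
have : D' ^+ 2 == 0 by rewrite eq_le D2 sqr_ge0.
by rewrite sqrf_eq0 => /eqP ->.
Qed.

Lemma polyak_step_contraction (g : vec -> R) (rho sigma Gg : R) x s :
  0 < sigma -> 0 < Gg -> s != 0 -> enorm s <= Gg -> subgrad g x s ->
  sublevel g rho !=set0 ->
  sigma * dist x (sublevel g rho) <= pos_part (g x + rho) ->
  dist (halfspace_proj (g x + rho) x s x) (sublevel g rho)
    <= Num.sqrt (1 - sigma ^+ 2 / Gg ^+ 2) * dist x (sublevel g rho).
Proof.
move=> sigma0 Gg0 sn0 sGg sub Yn eb; set Y := sublevel g rho.
have s0 := dotp_gt0 sn0.
have Yh y : Y y -> g x + rho + dotp s (y - x) <= 0.
  by rewrite /Y /sublevel /= => gy; have := sub y; lra.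
have key := halfspace_proj_dist_sqr s0 Yn Yh.
apply: le_sqrt_mul_of_sqr_le; rewrite ?dist_ge0 //.
suff : sigma ^+ 2 / Gg ^+ 2 * dist x Y ^+ 2 <= pos_part (g x + rho) ^+ 2 / dotp s s.
  by move: key; lra.
have Gg2 : 0 < Gg ^+ 2 by rewrite exprn_gt0.
have ssG : dotp s s <= Gg ^+ 2 by rewrite -enorm_sq; have := enorm_ge0 s; nra.
apply: (@le_trans _ _ (pos_part (g x + rho) ^+ 2 / Gg ^+ 2)).
  rewrite mulrAC -exprMn ler_pM2r ?invr_gt0 // ler_pXn2r ?nnegrE ?pos_part_ge0 //.
  by rewrite mulr_ge0 ?dist_ge0 // ltW.
by rewrite ler_wpM2l ?sqr_ge0 // lef_pV2.
Qed.

Lemma polyak_pre_halfspace_proj (g : vec -> R) (eta rho : R) x gf s : s != 0 ->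
  polyak_pre g eta rho x gf s = halfspace_proj (g x + rho) x s (x - eta *: gf).
Proof. by move=> sn0; rewrite /polyak_pre /halfspace_proj /= sn0 [g x + _ + rho]addrAC. Qed.

End PolyakStep.

Lemma ogd_polyak_dist_step (R : realType) (d : nat) (g : 'rV[R]_d -> R)
    (eps rho sigma Rad Gg eta Gf : R) (x s gf P : 'rV[R]_d) :
  convex_fun g -> 0 <= rho <= eps -> 0 < sigma -> 0 < Gg -> 0 <= eta ->
  sublevel g 0 `<=` ball_set Rad -> (exists y, g y = - eps) ->
  (forall y v, g y = - eps -> subgrad g y v -> sigma <= enorm v) ->
  (forall y v, enorm y <= Rad -> subgrad g y v -> enorm v <= Gg) ->
  enorm x <= Rad -> subgrad g x s -> enorm gf <= Gf ->
  is_proj (ball_set Rad) (polyak_pre g eta rho x gf s) P ->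
  dist P (sublevel g rho)
    <= Num.sqrt (1 - sigma ^+ 2 / Gg ^+ 2) * dist x (sublevel g rho) + eta * Gf.
Proof.
move=> cg rho_eps sigma0 Gg0 eta0 sub [y0 gy0] slater Ggb xR sx gfb prj.
set Y := sublevel g rho; have /andP [rho0 rhoe] := rho_eps.
have Yn : Y !=set0 by exists y0; rewrite /Y /sublevel /= gy0; lra.
have YB : Y `<=` ball_set Rad.
  by move=> y Yy; apply: sub; move: Yy; rewrite /Y /sublevel /=; lra.
have egf : enorm (eta *: gf) <= eta * Gf by rewrite enormZ ger0_norm // ler_wpM2l.
apply: le_trans (dist_proj_le (@convex_ball _ _ Rad) YB Yn prj) _.
have [s0|sn0] := eqVneq s 0.
  have xY : Y x by rewrite /Y /sublevel /=; have := sx y0; rewrite s0 dotp0l; lra.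
  rewrite /polyak_pre s0 eqxx /= (dist_mem xY) mulr0 add0r.
  apply: le_trans (dist_lipschitz _ x Yn) _.
  by rewrite (dist_mem xY) add0r addrAC subrr add0r enormN.
have eb : sigma * dist x Y <= pos_part (g x + rho).
  have [gx|gx] := lerP (g x + rho) 0.
    have xY : Y x by rewrite /Y /sublevel /=; lra.
    by rewrite (dist_mem xY) mulr0 pos_part_ge0.
  rewrite (pos_part_id (ltW gx)).
  by apply: sublevel_error_bound cg rho_eps (ltW sigma0) sub _ slater _; [exists y0 | lra].
rewrite polyak_pre_halfspace_proj //.
apply: le_trans (dist_lipschitz _ (halfspace_proj (g x + rho) x s x) Yn) _.
apply: lerD; first exact: polyak_step_contraction sigma0 Gg0 sn0 (Ggb _ _ xR sx) sx Yn eb.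
apply: le_trans (halfspace_proj_nonexpansive _ _ _ _ (dotp_gt0 sn0)) _.
by rewrite addrAC subrr add0r enormN.
Qed.

Lemma geometric_recursion_bound (R : realType) (D : nat -> R) (a c : R) (n : nat) :
  0 <= a < 1 -> 0 <= c ->
  (forall t, (1 <= t <= n)%N -> D t.+1 <= a * D t + c) ->
  forall t, (1 <= t <= n)%N -> D t.+1 <= a ^+ t * D 1%N + c / (1 - a).
Proof.
move=> /andP [a0 a1] c0 rec; elim=> [//|[|t] IH] /andP [_ tn].
  by apply: le_trans (rec 1%N tn) _; rewrite expr1 lerD2l ler_pdivlMr ?subr_gt0 //; nra.
apply: le_trans (rec t.+2 _) _; first by rewrite tn.
have {}IH := IH (ltnW tn).
have fix_c : a * (c / (1 - a)) + c = c / (1 - a) by field; lra.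
by rewrite exprS -mulrA -[c / (1 - a)]fix_c addrA -mulrDr lerD2r ler_wpM2l.
Qed.

Theorem mainTheorem10 (R : realType) (d T : nat)
  (g : 'rV[R]_d -> R) (f : nat -> 'rV[R]_d -> R) (gradf : nat -> 'rV[R]_d -> 'rV[R]_d)
  (Rad Gf Gg sigma eps eta rho : R)
  (x : nat -> 'rV[R]_d) (s : nat -> 'rV[R]_d) :
  (0 < d)%N -> (0 < T)%N ->
  convex_fun g ->
  (* (A1) *)
  0 < Rad -> sublevel g 0 `<=` ball_set Rad ->
  (* (A2) *)
  0 < Gf ->
  (forall t, (1 <= t <= T)%N -> convex_fun (f t) /\ differentiable_fun (f t)) ->
  (forall t y, (1 <= t <= T)%N -> is_gradient (f t) y (gradf t y)) ->
  (forall t y, (1 <= t <= T)%N -> enorm y <= Rad -> enorm (gradf t y) <= Gf) ->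
  (* (A3) *)
  0 < Gg ->
  (forall y v, enorm y <= Rad -> subgrad g y v -> enorm v <= Gg) ->
  (* (A4) *)
  0 < sigma -> 0 < eps ->
  (exists y, g y = - eps) ->
  (forall y v, g y = - eps -> subgrad g y v -> sigma <= enorm v) ->
  (* algorithm *)
  enorm (x 1%N) <= Rad ->
  0 < eta -> 0 <= rho <= eps ->
  (forall t, (1 <= t <= T)%N -> subgrad g (x t) (s t)) ->
  (forall t, (1 <= t <= T)%N ->
     is_proj (ball_set Rad) (polyak_pre g eta rho (x t) (gradf t (x t)) (s t)) (x t.+1)) ->
  let gamma := 1 - sigma ^+ 2 / Gg ^+ 2 in
  forall t, (1 <= t)%N -> (t < T)%N ->
    dist (x t.+1) (sublevel g rho)
      <= Num.sqrt gamma * dist (x t) (sublevel g rho) + eta * Gf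
    /\
    dist (x t.+1) (sublevel g rho)
      <= Num.sqrt gamma ^+ t * dist (x 1%N) (sublevel g rho)
         + eta * Gf / (1 - Num.sqrt gamma).
Proof.
move=> _ _ cg _ sub Gf0 _ _ gfb Gg0 Ggb sigma0 _ y0 slater x1 eta0 rho_eps sx prj gamma.
have xR t : (1 <= t <= T)%N -> enorm (x t) <= Rad.
  case: t => [//|[_|t /andP [_ tT]]]; first exact: x1.
  by case: (prj t.+1 (ltnW tT)).
have step t : (1 <= t <= T)%N ->
    dist (x t.+1) (sublevel g rho) <= Num.sqrt gamma * dist (x t) (sublevel g rho) + eta * Gf.
  move=> tT; apply: ogd_polyak_dist_step cg rho_eps sigma0 Gg0 (ltW eta0) sub y0 slater Ggb
    (xR t tT) (sx t tT) (gfb t _ tT (xR t tT)) (prj t tT).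
have gamma_lt1 : 0 <= Num.sqrt gamma < 1.
  rewrite sqrtr_ge0 -sqrtr1 ltr_sqrt // /gamma gtrDl oppr_lt0.
  by rewrite divr_gt0 // exprn_gt0.
move=> t t1 tT; have tT' : (1 <= t <= T)%N by rewrite t1 ltnW.
split; first exact: step.
have c0 : 0 <= eta * Gf by rewrite mulr_ge0 // ltW.
exact: (geometric_recursion_bound gamma_lt1 c0 step tT').
Qed.
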